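(* Let $A$ be an $m \times m$ normal centrosymmetric nonnegative matrix with eigenvalues $\alpha_1, \alpha_2, \ldots, \alpha_m$, where $\alpha_1$ is the Perron root of $A$, and let $u_1$ be a unit nonnegative eigenvector of $A$ corresponding to $\alpha_1$ with $Ju_1 = u_1$. Let $B$ be an $n \times n$ normal centrosymmetric nonnegative matrix with eigenvalues $\beta_1, \beta_2, \ldots, \beta_n$, where $\beta_1$ is the Perron root of $B$, and let $v_1$ be a unit nonnegative eigenvector of $B$ corresponding to $\beta_1$ with $Jv_1 = v_1$. Let $\rho, \xi \geq 0$ and let $\gamma_1, \gamma_2, \gamma_3$ be the eigenvalues of $$\widehat{C} = \begin{bmatrix} \beta_1 & \rho & \xi \\ \rho & \alpha_1 & \rho \\ \xi & \rho & \beta_1 \end{bmatrix}.$$ Then the matrix $$C = \begin{bmatrix} B & \rho v_1 u_1^T & \xi v_1 v_1^T \\ \rho u_1 v_1^T & A & J\rho u_1 v_1^T J \\ \xi v_1 v_1^T & \rho v_1 u_1^T & B \end{bmatrix}$$ is a normal centrosymmetric nonnegative matrix with eigenvalues $\gamma_1, \gamma_2, \gamma_3, \alpha_2, \ldots, \alpha_m, \beta_2, \ldots, \beta_n, \beta_2, \ldots, \beta_n$.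
   Context: $J$ denotes the reverse identity matrix (ones on the anti-diagonal, zeros elsewhere) of whatever size is appropriate where it appears (in $J\rho u_1 v_1^T J$, the left $J$ is $m \times m$ and the right $J$ is $n \times n$). A square matrix $Q$ is centrosymmetric if $JQJ = Q$, nonnegative if all entries are nonnegative, and normal if $QQ^* = Q^*Q$. The Perron root of a nonnegative matrix is its spectral radius, which is an eigenvalue. *)

From HB Require Import structures.
From mathcomp Require Import all_boot all_order all_algebra.
From mathcomp Require Import complex.
Set Implicit Arguments. Unset Strict Implicit. Unset Printing Implicit Defensive.
Import Order.TTheory GRing.Theory Num.Theory.
Local Open Scope ring_scope.

Section Defs.
Variable R : rcfType.

Definition Jmx (k : nat) : 'M[R]_k := \matrix_(i < k, j < k) ((j == rev_ord i)%:R).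

Definition centrosymmetric k (Q : 'M[R]_k) : Prop := Jmx k *m Q *m Jmx k = Q.

Definition nonneg_mx p q (Q : 'M[R]_(p, q)) : Prop := forall i j, 0 <= Q i j.

(* normal: Q Q^* = Q^* Q; for real matrices Q^* = Q^T *)
Definition normal_mx k (Q : 'M[R]_k) : Prop := Q *m Q^T = Q^T *m Q.

Definition cmx k (Q : 'M[R]_k) : 'M[R[i]]_k := map_mx (fun x => (x%:C)%C) Q.

(* the eigenvalues of Q, listed with algebraic multiplicity, are the items of s *)
Definition has_eigenvalues k (Q : 'M[R]_k) (s : seq R[i]) : Prop :=
  char_poly (cmx Q) = \prod_(x <- s) ('X - x%:P).

Definition is_perron_root k (Q : 'M[R]_k) (r : R) : Prop :=
  root (char_poly (cmx Q)) (r%:C)%C /\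
  forall l : R[i], root (char_poly (cmx Q)) l -> `|l| <= (r%:C)%C.

Definition Chat (b1 a1 rho xi : R) : 'M[R]_3 :=
  \matrix_(i < 3, j < 3)
    (nth 0 (nth [::] [:: [:: b1; rho; xi]; [:: rho; a1; rho]; [:: xi; rho; b1]] i) j).

Definition Cmx m n (A : 'M[R]_m) (B : 'M[R]_n) (u : 'cV[R]_m) (v : 'cV[R]_n)
  (rho xi : R) : 'M[R]_(n + (m + n)) :=
  block_mx B (row_mx (rho *: (v *m u^T)) (xi *: (v *m v^T)))
    (col_mx (rho *: (u *m v^T)) (xi *: (v *m v^T)))
    (block_mx A (Jmx m *m (rho *: (u *m v^T)) *m Jmx n)
              (rho *: (v *m u^T)) B).
End Defs.

From HB Require Import structures.
From mathcomp Require Import all_boot all_order all_algebra.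
From mathcomp Require Import complex zify ring.
Import Order.TTheory GRing.Theory Num.Theory.
Local Open Scope ring_scope.
Set Implicit Arguments. Unset Strict Implicit. Unset Printing Implicit Defensive.

(** Let D = diag(B, A, B), U = diag(v1, u1, v1) and Λ = diag(β1, α1, β1). Since
    J u1 = u1 and J v1 = v1, every off-diagonal block of C is a multiple of an
    outer product of the Perron vectors, so C = D + U M U^T where M is \hat C with
    zero diagonal; moreover U^T U = 1, D U = U Λ and Λ + M = \hat C. Sylvester's
    identity det(1 - XY) = det(1 - YX) then gives
    det(x - C) det(x - Λ) = det(x - D) det(x - \hat C), and cancelling
    det(x - Λ) = (x - β1)^2 (x - α1) leaves exactly the claimed spectrum.
    A normal real matrix shares its real eigenvectors with its transpose, so also
    D^T U = U Λ; then D and D^T act alike on the symmetric perturbation U M U^T,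
    which keeps C normal. *)

Lemma sylvester_det (F : comUnitRingType) k N (X : 'M[F]_(N, k)) (Y : 'M[F]_(k, N)) :
  \det (1%:M - X *m Y) = \det (1%:M - Y *m X).
Proof.
pose G := block_mx (1%:M : 'M_k) Y X (1%:M : 'M_N).
have elimX : block_mx 1%:M 0 (- X) 1%:M *m G = block_mx 1%:M Y 0 (1%:M - X *m Y).
  by rewrite /G mulmx_block !mul1mx !mul0mx !addr0 !mulNmx mulmx1 addNr addrC.
have elimY : block_mx 1%:M (- Y) 0 1%:M *m G = block_mx (1%:M - Y *m X) 0 X 1%:M.
  by rewrite /G mulmx_block !mul1mx !mul0mx !add0r mulNmx mulmx1 addrN.
have := congr1 determinant elimX; have := congr1 determinant elimY.
rewrite !det_mulmx !det_ublock !det_lblock !det1 !mul1r !mulr1.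
by move=> -> ->.
Qed.

Lemma det_lowrank_update (F : fieldType) k N (D : 'M[F]_N) (U : 'M[F]_(N, k))
    (Lam M : 'M[F]_k) (x : F) :
  D *m U = U *m Lam -> U^T *m U = 1%:M -> \det (x%:M - Lam) != 0 ->
  \det (x%:M - (D + U *m M *m U^T)) * \det (x%:M - Lam) =
  \det (x%:M - D) * \det (x%:M - (Lam + M)).
Proof.
move=> DU UtU detL_neq0.
set T := x%:M - D; set L := x%:M - Lam.
have TU : T *m U = U *m L by rewrite mulmxBl mulmxBr DU mul_scalar_mx mul_mx_scalar.
have L_unit : L \in unitmx by rewrite unitmxE unitfE.
have U_eq : U = T *m U *m invmx L by rewrite TU -mulmxA mulmxV ?mulmx1.
have factor_T : x%:M - (D + U *m M *m U^T) = T *m (1%:M - U *m (invmx L *m M *m U^T)).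
  rewrite opprD addrA -/T mulmxBr mulmx1; congr (_ - _).
  by rewrite {1}U_eq !mulmxA.
rewrite factor_T det_mulmx sylvester_det -!mulmxA UtU mulmx1 -mulrA; congr (_ * _).
rewrite mulrC -det_mulmx mulmxBr mulmx1 mulmxA mulmxV // mul1mx /L.
by rewrite opprD addrA.
Qed.

Lemma horner_char_poly (F : comNzRingType) k (Q : 'M[F]_k) x :
  (char_poly Q).[x] = \det (x%:M - Q).
Proof.
rewrite /char_poly -horner_evalE -det_map_mx; congr (\det _).
apply/matrixP => i j; rewrite !mxE.
by rewrite rmorphB rmorphMn /= !horner_evalE hornerX hornerC.
Qed.

Lemma poly_eq0_off_root (F : numDomainType) (P Q : {poly F}) :
  Q != 0 -> (forall x, ~~ root Q x -> root P x) -> P = 0.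
Proof.
move=> Q_neq0 PQ.
have /eqP : P * Q = 0.
  apply: (@roots_geq_poly_eq0 _ _ [seq (i%:R : F) | i <- iota 0 (size (P * Q))]).
  - apply/allP => y _; rewrite rootM.
    by case: (boolP (root Q y)) => [|/PQ ->]; rewrite ?orbT.
  - by rewrite map_inj_uniq ?iota_uniq // => i j /eqP; rewrite eqr_nat => /eqP.
  - by rewrite size_map size_iota.
by rewrite mulf_eq0 (negbTE Q_neq0) orbF => /eqP.
Qed.

Lemma char_poly_lowrank_update (F : numFieldType) k N (D : 'M[F]_N)
    (U : 'M[F]_(N, k)) (Lam M : 'M[F]_k) :
  D *m U = U *m Lam -> U^T *m U = 1%:M ->
  char_poly (D + U *m M *m U^T) * char_poly Lam = char_poly D * char_poly (Lam + M).
Proof.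
move=> DU UtU; apply/eqP; rewrite -subr_eq0; apply/eqP.
apply: (@poly_eq0_off_root F _ (char_poly Lam)) => [|x].
  exact: monic_neq0 (char_poly_monic Lam).
rewrite /root horner_char_poly => detL_neq0.
by rewrite hornerD hornerN !hornerM !horner_char_poly det_lowrank_update ?subrr.
Qed.

Section BlockDiagonal3.
Variable R : comNzRingType.

Definition bdiag3 p q p' q' (P : 'M[R]_(p, p')) (Q : 'M[R]_(q, q')) :
    'M[R]_(p + (q + p), p' + (q' + p')) :=
  block_mx P 0 0 (block_mx Q 0 0 P).

Lemma mul_bdiag3 p q p' q' p'' q'' (P : 'M[R]_(p, p')) (Q : 'M[R]_(q, q'))
    (P' : 'M[R]_(p', p'')) (Q' : 'M[R]_(q', q'')) :
  bdiag3 P Q *m bdiag3 P' Q' = bdiag3 (P *m P') (Q *m Q').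
Proof. by rewrite /bdiag3 !mulmx_block !(mul0mx, mulmx0, addr0, add0r). Qed.

Lemma tr_bdiag3 p q p' q' (P : 'M[R]_(p, p')) (Q : 'M[R]_(q, q')) :
  (bdiag3 P Q)^T = bdiag3 P^T Q^T.
Proof. by rewrite /bdiag3 !tr_block_mx !trmx0. Qed.

Lemma bdiag3_scalar p q (a : R) : bdiag3 (a%:M : 'M_p) (a%:M : 'M_q) = a%:M.
Proof. by rewrite /bdiag3 -!scalar_mx_block. Qed.

Lemma char_poly_bdiag3 p q (P : 'M[R]_p) (Q : 'M[R]_q) :
  char_poly (bdiag3 P Q) = char_poly P * (char_poly Q * char_poly P).
Proof. by rewrite /char_poly !char_block_diag_mx !det_ublock. Qed.

Lemma char_poly_scalar1 (a : R) : char_poly (a%:M : 'M_1) = 'X - a%:P.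
Proof. by rewrite /char_poly det_mx11 !mxE /= mulr1n. Qed.

End BlockDiagonal3.

Variant split3_spec p q : 'I_(p + (q + p)) -> Type :=
  | Split3Left (k : 'I_p) : split3_spec (lshift (q + p) k)
  | Split3Mid (k : 'I_q) : split3_spec (rshift p (lshift p k))
  | Split3Right (k : 'I_p) : split3_spec (rshift p (rshift q k)).

Lemma split3P p q i : @split3_spec p q i.
Proof.
case: (split_ordP i) => [k -> | k ->]; first exact: Split3Left.
by case: (split_ordP k) => [l -> | l ->]; constructor.
Qed.

Lemma rev_ord_lshift3 p q (k : 'I_p) :
  rev_ord (lshift (q + p) k) = rshift p (rshift q (rev_ord k)).
Proof. by apply: val_inj => /=; have := ltn_ord k; lia. Qed.

Lemma rev_ord_mid3 p q (k : 'I_q) :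
  rev_ord (rshift p (lshift p k) : 'I_(p + (q + p))) = rshift p (lshift p (rev_ord k)).
Proof. by apply: val_inj => /=; have := ltn_ord k; lia. Qed.

Lemma rev_ord_rshift3 p q (k : 'I_p) :
  rev_ord (rshift p (rshift q k) : 'I_(p + (q + p))) = lshift (q + p) (rev_ord k).
Proof. by apply: val_inj => /=; have := ltn_ord k; lia. Qed.

Section RealMatrices.
Variable R : rcfType.
Local Notation J := (Jmx R).

Lemma trmx_mul_self_eq0 k (z : 'cV[R]_k) : z^T *m z = 0 -> z = 0.
Proof.
move=> /matrixP /(_ 0 0); rewrite !mxE => sum_sqr_eq0.
have sqr_eq0 i : z i 0 * z i 0 = 0.
  apply: (@psumr_eq0P _ _ xpredT (fun l => z l 0 * z l 0)) => // [l _|].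
    by rewrite -expr2 sqr_ge0.
  by rewrite -[RHS]sum_sqr_eq0; apply: eq_bigr => l _; rewrite mxE.
apply/matrixP => i j; rewrite ord1 mxE.
by apply/eqP; rewrite -[_ == 0]orbb -mulf_eq0 sqr_eq0.
Qed.

Lemma normal_eigenvector_trmx k (Q : 'M[R]_k) (w : 'cV[R]_k) c :
  normal_mx Q -> Q *m w = c *: w -> Q^T *m w = c *: w.
Proof.
move=> normalQ Qw; apply/eqP; rewrite -subr_eq0; apply/eqP/trmx_mul_self_eq0.
(* [|Q^T w - c w|^2 = |Q w - c w|^2 = 0] since [Q Q^T = Q^T Q] *)
set s := w^T *m w.
have wQQw : w^T *m Q *m (Q^T *m w) = (c * c) *: s.
  rewrite mulmxA -(mulmxA _ Q) normalQ mulmxA -trmx_mul -mulmxA Qw.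
  by rewrite -scalemxAr [(c *: w)^T]linearZ -scalemxAl scalerA.
have wQw : w^T *m Q *m w = c *: s by rewrite -mulmxA Qw -scalemxAr.
have wQtw : w^T *m (Q^T *m w) = c *: s.
  by rewrite mulmxA -trmx_mul Qw [(c *: w)^T]linearZ -scalemxAl.
have zT : (Q^T *m w - c *: w)^T = w^T *m Q - c *: w^T.
  by rewrite linearB linearZ /= trmx_mul trmxK.
rewrite zT mulmxBl !mulmxBr wQQw -!scalemxAl -!scalemxAr wQw wQtw -/s.
by rewrite !scalerA !subrr ?subr0.
Qed.

Lemma normal_mx_add_sym N (D E : 'M[R]_N) :
  normal_mx D -> E^T = E -> D *m E = D^T *m E -> normal_mx (D + E).
Proof.
move=> normalD Esym DE.
have ED : E *m D^T = E *m D by apply: trmx_inj; rewrite !trmx_mul trmxK Esym.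
have DEt : (D + E)^T = D^T + E by rewrite linearD /= Esym.
by rewrite /normal_mx DEt !mulmxDl !mulmxDr normalD DE ED.
Qed.

Lemma normal_lowrank_update N k (D : 'M[R]_N) (U : 'M[R]_(N, k)) (M : 'M[R]_k) :
  normal_mx D -> D *m U = D^T *m U -> M^T = M -> normal_mx (D + U *m M *m U^T).
Proof.
move=> normalD DU Msym; apply: normal_mx_add_sym => //.
  by rewrite !trmx_mul trmxK Msym mulmxA.
by rewrite !mulmxA DU.
Qed.

Lemma Jmx_mulE k p (Q : 'M[R]_(k, p)) i j : (J k *m Q) i j = Q (rev_ord i) j.
Proof.
rewrite mxE (bigD1 (rev_ord i)) //= mxE eqxx mul1r big1 ?addr0 // => l /negbTE.
by rewrite mxE => ->; rewrite mul0r.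
Qed.

Lemma mul_JmxE k p (Q : 'M[R]_(p, k)) i j : (Q *m J k) i j = Q i (rev_ord j).
Proof.
rewrite mxE (bigD1 (rev_ord j)) //= mxE rev_ordK eqxx mulr1 big1 ?addr0 // => l.
by rewrite mxE eq_sym (can2_eq rev_ordK rev_ordK) => /negbTE ->; rewrite mulr0.
Qed.

Lemma trmx_Jmx k : (J k)^T = J k.
Proof. by apply/matrixP => i j; rewrite !mxE eq_sym (can2_eq rev_ordK rev_ordK). Qed.

Lemma Jmx_conjE p q (Q : 'M[R]_(p, q)) i j :
  (J p *m Q *m J q) i j = Q (rev_ord i) (rev_ord j).
Proof. by rewrite mul_JmxE Jmx_mulE. Qed.

Lemma Jmx_conj_outer p q a (x : 'cV[R]_p) (y : 'cV[R]_q) :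
  J p *m x = x -> J q *m y = y -> J p *m (a *: (x *m y^T)) *m J q = a *: (x *m y^T).
Proof.
move=> Jx Jy; rewrite -scalemxAr -scalemxAl mulmxA Jx -mulmxA.
by rewrite -[J q]trmx_Jmx -trmx_mul Jy.
Qed.

Lemma centrosymmetricP k (Q : 'M[R]_k) :
  centrosymmetric Q <-> forall i j, Q (rev_ord i) (rev_ord j) = Q i j.
Proof.
split=> [cQ i j | revQ]; first by rewrite -[in RHS]cQ Jmx_conjE.
by apply/matrixP => i j; rewrite Jmx_conjE revQ.
Qed.

Lemma centrosymmetric_block3 p q (P P' Y Y' : 'M[R]_p) (X X' : 'M[R]_(p, q))
    (Z : 'M[R]_(q, p)) (Q : 'M[R]_q) :
  centrosymmetric Q -> P' = J p *m P *m J p -> X' = J p *m X *m J q ->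
  Y' = J p *m Y *m J p ->
  centrosymmetric (block_mx P (row_mx X Y) (col_mx Z Y')
                            (block_mx Q (J q *m Z *m J p) X' P')).
Proof.
move=> /centrosymmetricP revQ -> -> ->; apply/centrosymmetricP => i j.
case: (split3P i) => k; case: (split3P j) => l;
rewrite ?rev_ord_lshift3 ?rev_ord_mid3 ?rev_ord_rshift3
  !(block_mxEul, block_mxEur, block_mxEdl, block_mxEdr,
    row_mxEl, row_mxEr, col_mxEu, col_mxEd) ?Jmx_conjE ?rev_ordK ?revQ //.
Qed.

Lemma nonneg_row_mx p q1 q2 (X1 : 'M[R]_(p, q1)) (X2 : 'M[R]_(p, q2)) :
  nonneg_mx X1 -> nonneg_mx X2 -> nonneg_mx (row_mx X1 X2).
Proof.
by move=> X1_ge0 X2_ge0 i j; case: (split_ordP j) => k ->; rewrite (row_mxEl, row_mxEr).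
Qed.

Lemma nonneg_col_mx p1 p2 q (X1 : 'M[R]_(p1, q)) (X2 : 'M[R]_(p2, q)) :
  nonneg_mx X1 -> nonneg_mx X2 -> nonneg_mx (col_mx X1 X2).
Proof.
by move=> X1_ge0 X2_ge0 i j; case: (split_ordP i) => k ->; rewrite (col_mxEu, col_mxEd).
Qed.

Lemma nonneg_block_mx p1 p2 q1 q2 (Xul : 'M[R]_(p1, q1)) (Xur : 'M[R]_(p1, q2))
    (Xdl : 'M[R]_(p2, q1)) (Xdr : 'M[R]_(p2, q2)) :
  nonneg_mx Xul -> nonneg_mx Xur -> nonneg_mx Xdl -> nonneg_mx Xdr ->
  nonneg_mx (block_mx Xul Xur Xdl Xdr).
Proof. by move=> *; apply: nonneg_col_mx; apply: nonneg_row_mx. Qed.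

Lemma nonneg_mulmx p q r (X : 'M[R]_(p, q)) (Y : 'M[R]_(q, r)) :
  nonneg_mx X -> nonneg_mx Y -> nonneg_mx (X *m Y).
Proof. by move=> X_ge0 Y_ge0 i j; rewrite mxE sumr_ge0 // => k _; rewrite mulr_ge0. Qed.

Lemma nonneg_scalemx p q a (X : 'M[R]_(p, q)) :
  0 <= a -> nonneg_mx X -> nonneg_mx (a *: X).
Proof. by move=> a_ge0 X_ge0 i j; rewrite mxE mulr_ge0. Qed.

Lemma nonneg_trmx p q (X : 'M[R]_(p, q)) : nonneg_mx X -> nonneg_mx X^T.
Proof. by move=> X_ge0 i j; rewrite mxE. Qed.

Lemma nonneg_scale_outer p q a (x : 'cV[R]_p) (y : 'cV[R]_q) :
  0 <= a -> nonneg_mx x -> nonneg_mx y -> nonneg_mx (a *: (x *m y^T)).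
Proof. by move=> a_ge0 x_ge0 y_ge0; apply/nonneg_scalemx/nonneg_mulmx/nonneg_trmx. Qed.

Lemma nonneg_Jmx k : nonneg_mx (J k).
Proof. by move=> i j; rewrite mxE ler0n. Qed.

(* [Chat] is an ['M_3]; block computations need its size written [1 + (1 + 1)]. *)
Lemma Chat_block (b a rho xi : R) :
  Chat b a rho xi = block_mx b%:M (row_mx rho%:M xi%:M) (col_mx rho%:M xi%:M)
                             (block_mx a%:M rho%:M rho%:M b%:M) :> 'M_(1 + (1 + 1)).
Proof.
apply/matrixP => i j; case: (split3P i) => k; case: (split3P j) => l;
by rewrite !(block_mxEul, block_mxEur, block_mxEdl, block_mxEdr,
             row_mxEl, row_mxEr, col_mxEu, col_mxEd) !ord1 !mxE.
Qed.

Lemma trmx_Chat (b a rho xi : R) : (Chat b a rho xi)^T = Chat b a rho xi.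
Proof.
apply/matrixP => i j; rewrite !mxE.
by case: i => [[|[|[|i]]] ?]; case: j => [[|[|[|j]]] ?].
Qed.

Lemma Chat_bdiag3_add (b a rho xi : R) :
  Chat b a rho xi = bdiag3 (b%:M : 'M_1) (a%:M : 'M_1) + Chat 0 0 rho xi.
Proof. by rewrite !Chat_block /bdiag3 !add_block_mx !raddf0 !addr0 !add0r. Qed.

Lemma Cmx_lowrank m n (A : 'M[R]_m) (B : 'M[R]_n) u v rho xi :
  J m *m u = u -> J n *m v = v ->
  Cmx A B u v rho xi =
    bdiag3 B A + bdiag3 v u *m (Chat 0 0 rho xi : 'M_(1 + (1 + 1))) *m (bdiag3 v u)^T.
Proof.
move=> Ju Jv; rewrite /Cmx Jmx_conj_outer // Chat_block tr_bdiag3 /bdiag3.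
rewrite !mulmx_block !(mul0mx, mulmx0, addr0, add0r, mul_mx_scalar, mul_row_col,
  mul_mx_row, mul_col_mx, mul_col_row, mul_row_block, mul_block_col).
rewrite !scale0r !mul0mx !add_row_mx !addr0 !add0r col_mx0 add0r -!scalemxAl.
by rewrite -block_mxEv !add_block_mx !addr0 !add0r.
Qed.

Section MatrixC.
Variables (m n : nat) (A : 'M[R]_m) (B : 'M[R]_n) (u : 'cV[R]_m) (v : 'cV[R]_n).
Variables (rho xi : R).
Hypotheses (Ju : J m *m u = u) (Jv : J n *m v = v).
Local Notation C := (Cmx A B u v rho xi).

Lemma Cmx_centrosymmetric : centrosymmetric A -> centrosymmetric B -> centrosymmetric C.
Proof. by move=> cA cB; apply: centrosymmetric_block3; rewrite ?cB ?Jmx_conj_outer. Qed.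

Lemma Cmx_nonneg :
  nonneg_mx A -> nonneg_mx B -> nonneg_mx u -> nonneg_mx v -> 0 <= rho -> 0 <= xi ->
  nonneg_mx C.
Proof.
move=> A_ge0 B_ge0 u_ge0 v_ge0 rho_ge0 xi_ge0.
have uv_ge0 := nonneg_scale_outer rho_ge0 u_ge0 v_ge0.
have vu_ge0 := nonneg_scale_outer rho_ge0 v_ge0 u_ge0.
have vv_ge0 := nonneg_scale_outer xi_ge0 v_ge0 v_ge0.
apply: nonneg_block_mx => //; first exact: nonneg_row_mx.
  exact: nonneg_col_mx.
apply: nonneg_block_mx => //.
by apply/nonneg_mulmx/nonneg_Jmx/nonneg_mulmx => //; exact: nonneg_Jmx.
Qed.

Lemma Cmx_normal (a b : R) :
  normal_mx A -> normal_mx B -> A *m u = a *: u -> B *m v = b *: v -> normal_mx C.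
Proof.
move=> nA nB Au Bv; rewrite Cmx_lowrank //; apply: normal_lowrank_update.
- by rewrite /normal_mx tr_bdiag3 !mul_bdiag3 nA nB.
- by rewrite tr_bdiag3 !mul_bdiag3 Au Bv (normal_eigenvector_trmx nA Au)
    (normal_eigenvector_trmx nB Bv).
- exact: trmx_Chat.
Qed.

Lemma char_poly_Cmx (a b : R) :
  A *m u = a *: u -> B *m v = b *: v -> u^T *m u = 1 -> v^T *m v = 1 ->
  char_poly C * char_poly (bdiag3 (b%:M : 'M_1) (a%:M : 'M_1)) =
  char_poly (bdiag3 B A) * char_poly (Chat b a rho xi).
Proof.
move=> Au Bv uu vv; rewrite Cmx_lowrank // (Chat_bdiag3_add b a).
apply: char_poly_lowrank_update.
  by rewrite !mul_bdiag3 Au Bv !mul_mx_scalar.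
by rewrite tr_bdiag3 mul_bdiag3 uu vv bdiag3_scalar.
Qed.

End MatrixC.

Lemma char_poly_cmx k (Q : 'M[R]_k) :
  char_poly (cmx Q) = map_poly (real_complex R) (char_poly Q).
Proof. by rewrite map_char_poly. Qed.

End RealMatrices.

Unset Implicit Arguments. Set Strict Implicit.

Theorem lemma3p5 (R : rcfType) (m n : nat)
  (A : 'M[R]_m.+1) (a1 : R) (alpha : 'I_m -> R[i]) (u1 : 'cV[R]_m.+1)
  (B : 'M[R]_n.+1) (b1 : R) (beta : 'I_n -> R[i]) (v1 : 'cV[R]_n.+1)
  (rho xi : R) (gamma : 'I_3 -> R[i]) :
  normal_mx A -> centrosymmetric A -> nonneg_mx A ->
  has_eigenvalues A ((a1%:C)%C :: [seq alpha k | k <- enum 'I_m]) ->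
  is_perron_root A a1 ->
  u1^T *m u1 = 1 -> nonneg_mx u1 -> A *m u1 = a1 *: u1 -> Jmx R m.+1 *m u1 = u1 ->
  normal_mx B -> centrosymmetric B -> nonneg_mx B ->
  has_eigenvalues B ((b1%:C)%C :: [seq beta k | k <- enum 'I_n]) ->
  is_perron_root B b1 ->
  v1^T *m v1 = 1 -> nonneg_mx v1 -> B *m v1 = b1 *: v1 -> Jmx R n.+1 *m v1 = v1 ->
  0 <= rho -> 0 <= xi ->
  has_eigenvalues (Chat b1 a1 rho xi) [seq gamma k | k <- enum 'I_3] ->
  let C := Cmx A B u1 v1 rho xi in
  normal_mx C /\ centrosymmetric C /\ nonneg_mx C /\
  has_eigenvalues C
    ([seq gamma k | k <- enum 'I_3] ++ [seq alpha k | k <- enum 'I_m]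
      ++ [seq beta k | k <- enum 'I_n] ++ [seq beta k | k <- enum 'I_n]).
Proof.
move=> nA cA A_ge0 eA _ uu u_ge0 Au Ju nB cB B_ge0 eB _ vv v_ge0 Bv Jv rho_ge0 xi_ge0 eC.
move=> C.
split; first exact: Cmx_normal nA nB Au Bv.
split; first exact: Cmx_centrosymmetric.
split; first exact: Cmx_nonneg.
rewrite /has_eigenvalues !char_poly_cmx in eA eB eC *.
have := congr1 (map_poly (real_complex R)) (char_poly_Cmx rho xi Ju Jv Au Bv uu vv).
rewrite !char_poly_bdiag3 !char_poly_scalar1 !rmorphM /= !map_polyXsubC eA eB eC.
rewrite !big_cons !big_cat /= => charC.
set L := ('X - _) * (('X - _) * ('X - _)) in charC.
have L_neq0 : L != 0 by rewrite /L !mulf_neq0 ?polyXsubC_eq0.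
by apply: (mulIf L_neq0); rewrite charC /L; ring.
Qed.
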